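(* Let $R$ be a semistandard cylindric tableau and $S$ a set of boxes satisfying the input conditions of full multi-insertion, and let $G$ and $H$ be two bumping routes created when $\operatorname{FullMulti}(R,S)$ is performed, with $G_1<H_1$ (the first points, compared in the order $\le$ on points). Then for every plane row $r$ such that both $G(r)$ and $H(r)$ are defined, $H(r)$ is strictly to the left of $G(r)$, and the event that extended $G$ to include $G(r)$ occurred after the event that extended $H$ to include $H(r)$.
   Context: Fix integers $n>k\ge1$. A cylindric partition is a weakly decreasing integer sequence $(\lambda_m)_{m\in\mathbb Z}$ with $\lambda_m=\lambda_{m+k}+n-k$. A point $(x,y)\in\mathbb Z^2$ is in plane row $x$ and plane column $y$ and lies in $\lambda$ if $y\le\lambda_x$; a point $(x,y)$ is strictly left of $(x,y')$ if $y<y'$. Total order on points: $(x_1,y_1)\le(x_2,y_2)$ iff $x_1<x_2$, or $x_1=x_2$ and $y_1\ge y_2$. Boxes are classes of points modulo translation by multiples of $(-k,n-k)$; $\pi$ is the projection; row $x$ of the cylinder is the image of plane row $x$ (indexed mod $k$), column $y$ the image of plane column $y$; for a box $B$ in row $\pi(s)$, $\pi^{-1}_s(B)$ is its representative in plane row $s$. Within a row, boxes are ordered left to right by $y$-coordinates of representatives in a fixed plane row. $\mu\subseteq\lambda$ means $\mu_m\le\lambda_m$ for all $m$. A (semistandard cylindric) tableau of shape $\lambda/\mu$ is a map from the boxes in $\lambda$ but not $\mu$ to a totally ordered alphabet, weakly increasing along plane rows and strictly increasing down plane columns; its shapes are part of its data. Full multi-insertion $\operatorname{FullMulti}(R,S)$: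 input a tableau $R$ with outer shape $\lambda$, inner shape $\mu$, and a set $S$ of boxes not in $\mu$, no two in the same column, such that $\mu$ plus $S$ is a cylindric partition. Choose an integer $r_0$. For $h=r_0,\dots,r_0+k-1$, go through the boxes of $S$ in row $h$ from left to right: if the box is in $\lambda$, remove its entry $x$ and append $(x,h+1)$ to a queue $q_0$; otherwise add the box to $\lambda$. All boxes of $S$ are added to the inner shape. Then, while the current queue $q$ is nonempty: start an empty queue $q'$; remove pairs $(x,s)$ from the front of $q$ one at a time; if $x$ is $\ge$ every entry in row $s$, put $x$ into the leftmost box of row $s$ not in the current outer shape and add it to the outer shape; otherwise replace the leftmost entry $x'$ of row $s$ greater than $x$ by $x$ and append $(x',s+1)$ to $q'$; when $q$ is exhausted set $q:=q'$. These actions happen one after another and thus are totally ordered in time. Bumping route of a point $P$ with $\pi(P)\in S$ in plane row $s_0$: a list of points starting with $P$ (added at the moment $\pi(P)$ is processed in the removal phase). If $\pi(P)$ was in $\lambda$, the pair created from its entry is tracked; whenever the tracked pair is processed and its letter is placed into a box $B$, the point $\pi^{-1}_s(B)$ is appended (this placement is the event extending the route), where $s$ is one more than the plane row of the previously appended point; if an entry $x'$ was displaced, the new pair $(x',\cdot)$ becomes tracked. For a route $H$, $H_1$ is its first point and $H(r)$ is its point in plane row $r$, if any. *)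

From HB Require Import structures.
From mathcomp Require Import all_boot all_order all_algebra.
Set Implicit Arguments. Unset Strict Implicit. Unset Printing Implicit Defensive.
Import Order.TTheory GRing.Theory Num.Theory.
Local Open Scope ring_scope.

(** Points of Z^2: (plane row, plane column). *)
Definition point := (int * int)%type.
(** Boxes are represented by their (unique) representative lying in a plane
    row in [0, k): a box B = (r, c) with 0 <= r < k is the class of the point
    (r, c) modulo translations by multiples of (-k, n-k). *)
Definition box := (int * int)%type.

(** Events of the insertion: (label of the route = the box of S where the
    route starts, box into which a letter of that route is placed). *)
Definition event := option (box * box).

Definition upd (A : Type) (f : box -> A) (B : box) (v : A) : box -> A :=
  fun B' => if B' == B then v else f B'.

Section Cylindric.
Variables (n k : nat).

Definition shift : int := Posz (n - k)%N.
Definition kz : int := Posz k.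
Definition modk (x : int) : int := (x %% kz)%Z.
Definition divk (x : int) : int := (x %/ kz)%Z.

Definition cylindric (lam : int -> int) : Prop :=
  (forall m : int, lam (m + 1) <= lam m) /\
  (forall m : int, lam m = lam (m + kz) + shift).

Definition proj (P : point) : box := (modk P.1, P.2 + divk P.1 * shift).

Definition is_box (B : box) : bool := (0 <= B.1) && (B.1 < kz).

Definition in_part (lam : int -> int) (P : point) : bool := P.2 <= lam P.1.
Definition box_in (lam : int -> int) (B : box) : bool := B.2 <= lam B.1.
Definition in_skew (lam mu : int -> int) (P : point) : bool :=
  in_part lam P && ~~ in_part mu P.

Definition same_column (B B' : box) : Prop :=
  exists P P' : point, proj P = B /\ proj P' = B' /\ P.2 = P'.2.

Definition pt_le (P Q : point) : bool :=
  (P.1 < Q.1) || ((P.1 == Q.1) && (Q.2 <= P.2)).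
Definition pt_lt (P Q : point) : bool := pt_le P Q && (P != Q).

Definition strictly_left (P Q : point) : Prop := P.1 = Q.1 /\ P.2 < Q.2.

Section Alphabet.
Variables (disp : Order.disp_t) (T : orderType disp).

(** A tableau: outer shape, inner shape, and entries (meaningful on the boxes
    of outer/inner). *)
Record tableau := Tableau {
  outer : int -> int;
  inner : int -> int;
  entry : box -> T }.

Definition is_tableau (R : tableau) : Prop :=
  [/\ cylindric (outer R), cylindric (inner R),
      (forall m, inner R m <= outer R m),
      (forall x y y' : int,
          in_skew (outer R) (inner R) (x, y) ->
          in_skew (outer R) (inner R) (x, y') -> y <= y' ->
          (entry R (proj (x, y)) <= entry R (proj (x, y')))%O) &
      (forall x x' y : int,
          in_skew (outer R) (inner R) (x, y) ->
          in_skew (outer R) (inner R) (x', y) -> x < x' ->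
          (entry R (proj (x, y)) < entry R (proj (x', y)))%O)].

Definition multi_input (R : tableau) (S : seq box) : Prop :=
  [/\ uniq S,
      (forall B, B \in S -> is_box B),
      (forall B, B \in S -> ~~ box_in (inner R) B),
      (forall B B', B \in S -> B' \in S -> B <> B' -> ~ same_column B B') &
      exists nu : int -> int, cylindric nu /\
        forall P : point, in_part nu P <-> (in_part (inner R) P \/ proj P \in S)].

(** Order in which the boxes of S are processed in the removal phase:
    rows h = r0, ..., r0+k-1, each row from left to right. *)
Definition row_index (r0 : int) (B : box) : int := r0 + modk (B.1 - r0).
Definition proc_le (r0 : int) (B B' : box) : bool :=
  (row_index r0 B < row_index r0 B') ||
  ((row_index r0 B == row_index r0 B') && (B.2 <= B'.2)).

(** State of the algorithm: outer shape, inner shape, entries, boxes of S still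
    to be processed in the removal phase, current queue q, next queue q'.
    Queue elements are (letter, row, label of the tracked route). *)
Record state := State {
  st_out : box -> bool;
  st_inn : box -> bool;
  st_ent : box -> T;
  st_todo : seq box;
  st_q : seq (T * int * box);
  st_q' : seq (T * int * box) }.

Definition in_tab (st : state) (B : box) : bool := st_out st B && ~~ st_inn st B.

Definition leftmost_free (st : state) (s : int) (B : box) : Prop :=
  [/\ B.1 = modk s, ~~ st_out st B &
      forall B', B'.1 = modk s -> ~~ st_out st B' -> B.2 <= B'.2].

Definition leftmost_greater (st : state) (s : int) (x : T) (B : box) : Prop :=
  [/\ B.1 = modk s, in_tab st B, (x < st_ent st B)%O &
      forall B', B'.1 = modk s -> in_tab st B' -> (x < st_ent st B')%O ->
        B.2 <= B'.2].

Inductive step : state -> event -> state -> Prop :=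
| StepRemIn st B todo :
    st_todo st = B :: todo -> st_out st B ->
    step st (Some (B, B))
      (State (st_out st) (upd (st_inn st) B true) (st_ent st) todo
             (rcons (st_q st) (st_ent st B, B.1 + 1, B)) (st_q' st))
| StepRemOut st B todo :
    st_todo st = B :: todo -> ~~ st_out st B ->
    step st (Some (B, B))
      (State (upd (st_out st) B true) (upd (st_inn st) B true) (st_ent st) todo
             (st_q st) (st_q' st))
| StepPlace st x s l q B :
    st_todo st = [::] -> st_q st = (x, s, l) :: q ->
    (forall B', B'.1 = modk s -> in_tab st B' -> (st_ent st B' <= x)%O) ->
    leftmost_free st s B ->
    step st (Some (l, B))
      (State (upd (st_out st) B true) (st_inn st) (upd (st_ent st) B x) [::]
             q (st_q' st))
| StepBump st x s l q B :
    st_todo st = [::] -> st_q st = (x, s, l) :: q ->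
    leftmost_greater st s x B ->
    step st (Some (l, B))
      (State (st_out st) (st_inn st) (upd (st_ent st) B x) [::]
             q (rcons (st_q' st) (st_ent st B, s + 1, l)))
| StepSwap st :
    st_todo st = [::] -> st_q st = [::] -> st_q' st <> [::] ->
    step st None
      (State (st_out st) (st_inn st) (st_ent st) [::] (st_q' st) [::])
| StepDone st :
    st_todo st = [::] -> st_q st = [::] -> st_q' st = [::] ->
    step st None st.

Definition init_state (R : tableau) (S : seq box) (r0 : int) : state :=
  State (box_in (outer R)) (box_in (inner R)) (entry R)
        (path.sort (proc_le r0) S) [::] [::].

(** the execution of FullMulti(R, S) with parameter r0: st t is the state
    after t actions, ev t the event of action t *)
Definition is_run (R : tableau) (S : seq box) (r0 : int)
    (st : nat -> state) (ev : nat -> event) : Prop :=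
  st 0%N = init_state R S r0 /\ forall t, step (st t) (ev t) (st t.+1).

End Alphabet.

Definition is_label (B0 : box) (e : event) : bool :=
  if e is Some (l, _) then l == B0 else false.

(** route_pt ev P r X t : the bumping route of P has the point X in plane row r,
    and it was added by the event at time t. *)
Definition route_pt (ev : nat -> event) (P : point) (r : int) (X : point)
    (t : nat) : Prop :=
  exists (b : box) (j : nat),
    [/\ ev t = Some (proj P, b),
        count (fun t' => is_label (proj P) (ev t')) (iota 0 t) = j,
        r = P.1 + Posz j, X.1 = r & proj X = b].

End Cylindric.

From HB Require Import structures.
From mathcomp Require Import all_boot all_order all_algebra.
From mathcomp Require Import zify.
Import Order.TTheory GRing.Theory Num.Theory.
Set Implicit Arguments. Unset Strict Implicit. Unset Printing Implicit Defensive.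
Local Open Scope ring_scope.

(* Give each cylinder row a frontier: the column of the box of that row that
   received a letter last. Every action puts a letter strictly to the right of
   the frontier of its row and moves the frontier there, so within a row the
   boxes receiving letters move rightwards in time. The reason is an invariant
   on letters: the letters queued for a row are weakly increasing, each is at
   most the letter sent last towards that row, and that letter is at most every
   entry to the right of the frontier of the row above.
   Independently, the queues serve the routes in rounds: the j-th extension of a
   route happens in round j, and inside a round the routes are served in the
   processing order of their starting boxes, because moving letters from one
   queue to the next preserves that order.
   If G_1 < H_1 and both routes meet plane row r, then H got there in an earlier
   round than G, or in the same round but served first since H_1 lies left of
   G_1 in the same row. So the event creating H(r) comes first, and H(r), in the
   same cylinder row, lies strictly left of G(r). *)

Definition updi (A : Type) (f : int -> A) (x : int) (v : A) : int -> A :=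
  fun y => if y == x then v else f y.

Lemma updE (A : Type) (f : box -> A) B v B' :
  upd f B v B' = if B' == B then v else f B'.
Proof. by []. Qed.

Lemma updiE (A : Type) (f : int -> A) x v y :
  updi f x v y = if y == x then v else f y.
Proof. by []. Qed.

Lemma upd_true (f : box -> bool) B X : f X -> upd f B true X.
Proof. by rewrite updE; case: eqP. Qed.

Lemma sorted_rcons_ub (A : eqType) (e : rel A) s y :
  sorted e s -> (forall x, x \in s -> e x y) -> sorted e (rcons s y).
Proof. by case: s => //= x s; rewrite rcons_path => -> /=; apply; exact: mem_last. Qed.

Section CylinderRows.
Variable k : nat.
Hypothesis k_gt0 : (0 < k)%N.

Definition is_row (r : int) : bool := (0 <= r) && (r < kz k).

Lemma modk_row x : is_row (modk k x).
Proof.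
have kz_gt0 : 0 < kz k by rewrite /kz; lia.
by rewrite /is_row /modk modz_ge0 ?ltz_pmod // gt_eqF.
Qed.

Lemma modk_id x : is_row x -> modk k x = x.
Proof. by move=> /andP[x_ge0 x_lt]; rewrite /modk modz_small // x_ge0. Qed.

Lemma modkDml x y : modk k (modk k x + y) = modk k (x + y).
Proof. by rewrite /modk modzDml. Qed.

Lemma modk_succ_inj a b :
  is_row a -> is_row b -> modk k (a + 1) = modk k (b + 1) -> a = b.
Proof.
move=> ra rb eq_ab; rewrite -(modk_id ra) -(modk_id rb).
by rewrite -(addrK 1 a) -(addrK 1 b) -modkDml eq_ab modkDml.
Qed.

Lemma divk_row x : is_row x -> divk k x = 0.
Proof.
by move=> /andP[x_ge0 x_lt]; rewrite /divk divz_small // x_ge0 /=; rewrite /kz in x_lt *; lia.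
Qed.

Lemma proj_row n r c : is_row r -> proj n k (r, c) = (r, c).
Proof. by move=> rr; rewrite /proj /= modk_id // divk_row // mul0r addr0. Qed.

End CylinderRows.

Section ProcessingOrder.
Variables (k : nat) (r0 : int).
Local Notation proc := (proc_le k r0).

Lemma proc_trans : transitive proc.
Proof.
move=> b a c; rewrite /proc_le.
set x := row_index _ _ _; set y := row_index _ _ _; set z := row_index _ _ _.
by move=> /orP[?|/andP[/eqP ? ?]] /orP[?|/andP[/eqP ? ?]]; apply/orP;
  [left; lia | left; lia | left; lia | right; apply/andP; split; [apply/eqP|]; lia].
Qed.

Lemma proc_total : total proc.
Proof.
move=> a b; rewrite /proc_le.
by case: (ltgtP (row_index k r0 a) (row_index k r0 b)) => //= _; exact: le_total.
Qed.

Lemma proc_same_row (B B' : box) : proc B B' -> B.1 = B'.1 -> B.2 <= B'.2.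
Proof.
by rewrite /proc_le /row_index => /orP[lt_row|/andP[_ //]] eq_row; rewrite eq_row ltxx in lt_row.
Qed.

Lemma proc_head_min B rest B' : sorted proc (B :: rest) -> B' \in rest -> proc B B'.
Proof. by move=> /(order_path_min proc_trans)/allP; apply. Qed.

End ProcessingOrder.

Section Invariants.
Variables (k : nat) (disp : Order.disp_t) (T : orderType disp).
Variables (R : tableau T) (S : seq box) (r0 : int) (nu : int -> int).
Hypothesis k_gt0 : (0 < k)%N.
Hypothesis S_uniq : uniq S.
Hypothesis S_rows : forall B, B \in S -> is_row k B.1.
Hypothesis S_outside_inner : forall B, B \in S -> inner R B.1 < B.2.
Hypothesis nu_S : forall r c, is_row k r ->
  (c <= nu r) = (c <= inner R r) || ((r, c) \in S).
Hypothesis inner_le_outer : forall r, inner R r <= outer R r.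
Hypothesis R_row_mono : forall r c c', is_row k r ->
  inner R r < c -> c <= c' -> c' <= outer R r ->
  (entry R (r, c) <= entry R (r, c'))%O.

Local Notation proc := (proc_le k r0).
Local Notation is_row := (is_row k).
Local Notation modk := (modk k).

Definition pending (st : state T) : seq (T * int * box) := st_q st ++ st_q' st.

(* [front r] is the column of the box of row [r] that received a letter last
   (initially [inner R r]), [last r] the letter most recently placed in row [r]
   (if any) and [bound tau] the letter most recently sent towards row [tau]. *)
Record todo_inv (st : state T) (front : int -> int) : Prop := {
  todo_q'_nil : st_todo st != [::] -> st_q' st = [::];
  todo_sorted : sorted proc (st_todo st);
  todo_uniq : uniq (st_todo st);
  todo_sub : {subset st_todo st <= S};
  done_inner : forall B, B \in S -> B \notin st_todo st -> st_inn st B;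
  todo_not_inner : forall B, B \in st_todo st -> ~~ st_inn st B;
  inner_le_front : forall r, is_row r -> inner R r <= front r;
  todo_right_of_front : forall B, B \in st_todo st -> front B.1 < B.2;
  inner_sub_outer : forall r c, is_row r -> st_inn st (r, c) -> st_out st (r, c)
}.

Record row_inv (st : state T) (front : int -> int) (last bound : int -> option T)
  : Prop := {
  row_mono : forall r c c', is_row r -> in_tab st (r, c) -> in_tab st (r, c') ->
    c <= c' -> (st_ent st (r, c) <= st_ent st (r, c'))%O;
  outer_left_closed : forall r c c', is_row r -> st_out st (r, c) -> c' <= c ->
    st_out st (r, c');
  front_outer : forall r, is_row r -> st_out st (r, front r);
  left_le_last : forall r c, is_row r -> c <= front r -> in_tab st (r, c) ->
    exists2 z, last r = Some z & (st_ent st (r, c) <= z)%O;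
  bound_le_right : forall r c b, is_row r -> front r < c -> in_tab st (r, c) ->
    bound (modk (r + 1)) = Some b -> (b <= st_ent st (r, c))%O
}.

Record queue_inv (st : state T) (last bound : int -> option T) : Prop := {
  last_none : st_todo st != [::] -> forall r, last r = None;
  last_le_pending : forall p, p \in pending st -> forall z,
    last (modk p.1.2) = Some z -> (z <= p.1.1)%O;
  pending_sorted : forall tau,
    sorted <=%O [seq p.1.1 | p <- pending st & modk p.1.2 == tau];
  pending_le_bound : forall p, p \in pending st ->
    exists2 b, bound (modk p.1.2) = Some b & (p.1.1 <= b)%O;
  last_le_bound : forall tau z, last tau = Some z ->
    exists2 b, bound tau = Some b & (z <= b)%O
}.

Lemma todo_inv_init : todo_inv (init_state k R S r0) (inner R).
Proof.
split => //=.
- exact: sort_sorted (@proc_total k r0) S.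
- by rewrite sort_uniq.
- by move=> B; rewrite mem_sort.
- by move=> B SB; rewrite mem_sort SB.
- by move=> B; rewrite mem_sort /box_in -ltNge => /S_outside_inner.
- by move=> B; rewrite mem_sort => /S_outside_inner.
- by rewrite /box_in => r c _ /le_trans; apply.
Qed.

Lemma row_inv_init :
  row_inv (init_state k R S r0) (inner R) (fun _ => None) (fun _ => None).
Proof.
split => //=.
- rewrite /in_tab /box_in /= => r c c' rr /andP[c_out c_in] /andP[c'_out _] le_cc'.
  by apply: R_row_mono; rewrite // ltNge.
- by rewrite /box_in /= => r c c' _ c_out c'_c; exact: le_trans c'_c c_out.
- by move=> r _; exact: inner_le_outer.
- by rewrite /in_tab /box_in /= => r c _ c_in /andP[_ /negP].
Qed.

Lemma queue_inv_init :
  queue_inv (init_state k R S r0) (fun _ => None) (fun _ => None).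
Proof. by []. Qed.

Lemma pending_le_right st front last bound r c :
  row_inv st front last bound -> queue_inv st last bound ->
  is_row r -> front r < c -> in_tab st (r, c) ->
  forall p, p \in pending st -> modk p.1.2 = modk (r + 1) ->
  (p.1.1 <= st_ent st (r, c))%O.
Proof.
move=> J K rr front_c c_tab p p_pend p_r; have [b bE p_b] := pending_le_bound K p_pend.
by apply: le_trans p_b (bound_le_right J rr front_c c_tab _); rewrite -p_r.
Qed.

Lemma last_le_right st front last bound r c :
  row_inv st front last bound -> queue_inv st last bound ->
  is_row r -> front r < c -> in_tab st (r, c) ->
  forall z, last (modk (r + 1)) = Some z -> (z <= st_ent st (r, c))%O.
Proof.
move=> J K rr front_c c_tab z last_z; have [b bE z_b] := last_le_bound K last_z.
exact: le_trans z_b (bound_le_right J rr front_c c_tab bE).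
Qed.

Lemma pending_tail_sorted st last bound x s l q :
  queue_inv st last bound -> st_q st = (x, s, l) :: q ->
  forall tau, sorted <=%O [seq p.1.1 | p <- q ++ st_q' st & modk p.1.2 == tau].
Proof.
move=> K qE tau; have := pending_sorted K tau.
by rewrite /pending qE /=; case: ifP => _ //= /path_sorted.
Qed.

Lemma pending_head_min st last bound x s l q :
  queue_inv st last bound -> st_q st = (x, s, l) :: q ->
  forall p, p \in q ++ st_q' st -> modk p.1.2 = modk s -> (x <= p.1.1)%O.
Proof.
move=> K qE p p_in p_s.
have := pending_sorted K (modk s); rewrite /pending qE /= eqxx /=.
move=> /(order_path_min (@le_trans _ T))/allP; apply.
by apply/mapP; exists p; rewrite // mem_filter p_s eqxx.
Qed.

Lemma queue_inv_same_pending st st' last bound :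
  queue_inv st last bound -> pending st' = pending st ->
  (st_todo st' != [::] -> st_todo st != [::]) -> queue_inv st' last bound.
Proof.
move=> [last_nil ? ? ? ?] pendingE todo'_todo.
by split; rewrite ?pendingE // => /todo'_todo; exact: last_nil.
Qed.

Lemma inner_between_front_head st front rB cB rest :
  todo_inv st front -> st_todo st = (rB, cB) :: rest ->
  forall c, front rB < c < cB -> st_inn st (rB, c).
Proof.
move=> I todoE c /andP[front_c c_cB].
have BS : (rB, cB) \in S by apply: (todo_sub I); rewrite todoE mem_head.
have rB_row : is_row rB := S_rows BS.
have cS : (rB, c) \in S.
  have : c <= nu rB by rewrite (le_trans (ltW c_cB)) // nu_S // BS orbT.
  rewrite nu_S // => /orP[c_in|//].
  by have := inner_le_front I rB_row; lia.
apply: (done_inner I cS); rewrite todoE inE negb_or; apply/andP; split.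
  by apply/eqP => -[eq_c]; rewrite eq_c ltxx in c_cB.
apply/negP => c_rest.
have sorted_todo := todo_sorted I; rewrite todoE in sorted_todo.
by have := proc_same_row (proc_head_min sorted_todo c_rest) erefl => /=; lia.
Qed.

Lemma removal_no_tab_left st front last bound rB cB rest r c :
  todo_inv st front -> row_inv st front last bound -> queue_inv st last bound ->
  st_todo st = (rB, cB) :: rest -> is_row r ->
  c <= updi front rB cB r -> (r, c) != (rB, cB) -> ~~ in_tab st (r, c).
Proof.
move=> I J K todoE rr c_le neB; apply/negP => c_tab.
have last_nil r' : last r' = None by apply: (last_none K); rewrite todoE.
move: c_le; rewrite updiE; case: eqP => [eq_r|_] c_front; last first.
  by have [z] := left_le_last J rr c_front c_tab; rewrite last_nil.
rewrite eq_r in neB c_tab rr; case: (lerP c (front rB)) => [c_le_front|front_c].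
  by have [z] := left_le_last J rr c_le_front c_tab; rewrite last_nil.
have c_cB : c < cB by rewrite lt_neqAle c_front andbT; apply: contraNneq neB => ->.
move: c_tab; rewrite /in_tab (inner_between_front_head I todoE) ?andbF //.
by rewrite front_c c_cB.
Qed.

Lemma todo_inv_remove st st' front rB cB rest :
  todo_inv st front -> st_todo st = (rB, cB) :: rest ->
  st_todo st' = rest -> st_inn st' = upd (st_inn st) (rB, cB) true ->
  (forall B, st_out st B -> st_out st' B) -> st_out st' (rB, cB) ->
  st_q' st' = st_q' st ->
  todo_inv st' (updi front rB cB).
Proof.
move=> I todoE todo'E inn'E out_sub B_out' q'E.
have B_todo : (rB, cB) \in st_todo st by rewrite todoE mem_head.
have rB_row : is_row rB := S_rows (todo_sub I B_todo).
have front_cB : front rB < cB := todo_right_of_front I B_todo.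
have := todo_uniq I; rewrite todoE /= => /andP[B_rest uniq_rest].
have sorted_todo := todo_sorted I; rewrite todoE in sorted_todo.
split; rewrite ?todo'E ?inn'E ?q'E.
- by rewrite (todo_q'_nil I) // todoE.
- exact: path_sorted sorted_todo.
- exact: uniq_rest.
- by move=> B B_in; apply: (todo_sub I); rewrite todoE inE B_in orbT.
- move=> B BS B_rest'; rewrite updE; case: eqP => // neB.
  by apply: (done_inner I BS); rewrite todoE inE negb_or B_rest' andbT; apply/eqP.
- move=> B B_in; rewrite updE; case: eqP => [eqB|_].
    by rewrite -eqB B_in in B_rest.
  by apply: (todo_not_inner I); rewrite todoE inE B_in orbT.
- move=> r rr; rewrite updiE; case: eqP => [->|_]; last exact: inner_le_front I r rr.
  by have := inner_le_front I rB_row; lia.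
- move=> [r c] B_in; rewrite updiE; case: eqP => /= [eq_r|_].
    have := proc_same_row (proc_head_min sorted_todo B_in) (esym eq_r).
    rewrite /= le_eqVlt => /orP[/eqP eq_c|//].
    by rewrite -eq_r eq_c B_in in B_rest.
  by apply: (todo_right_of_front I (B := (r, c))); rewrite todoE inE B_in orbT.
- move=> r c rr; rewrite updE; case: eqP => [->//|_].
  by move=> /(inner_sub_outer I rr) /out_sub.
Qed.

Lemma todo_inv_queue st st' front front' :
  todo_inv st front -> st_todo st = [::] -> st_todo st' = [::] ->
  st_inn st' = st_inn st -> (forall B, st_out st B -> st_out st' B) ->
  (forall r, front r <= front' r) -> todo_inv st' front'.
Proof.
move=> I todoE todo'E inn'E out_sub le_front.
split; rewrite ?todo'E ?inn'E //.
- by move=> B BS _; apply: (done_inner I BS); rewrite todoE.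
- by move=> r rr; exact: le_trans (inner_le_front I rr) (le_front r).
- by move=> r c rr /(inner_sub_outer I rr) /out_sub.
Qed.

Lemma in_tab_remove (st st' : state T) B X :
  st_inn st' = upd (st_inn st) B true ->
  (X != B -> st_out st' X = st_out st X) ->
  in_tab st' X = (X != B) && in_tab st X.
Proof.
rewrite /in_tab => -> outE; rewrite updE.
by case: eqP => [_|/eqP neB]; rewrite ?andbF // outE.
Qed.

Lemma row_inv_remove_in st front last bound rB cB rest :
  todo_inv st front -> row_inv st front last bound -> queue_inv st last bound ->
  st_todo st = (rB, cB) :: rest -> st_out st (rB, cB) ->
  row_inv (State (st_out st) (upd (st_inn st) (rB, cB) true) (st_ent st) rest
             (rcons (st_q st) (st_ent st (rB, cB), rB + 1, (rB, cB))) (st_q' st))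
          (updi front rB cB) last
          (updi bound (modk (rB + 1)) (Some (st_ent st (rB, cB)))).
Proof.
move=> I J K todoE B_out; set st' := State _ _ _ _ _ _.
have B_todo : (rB, cB) \in st_todo st by rewrite todoE mem_head.
have rB_row : is_row rB := S_rows (todo_sub I B_todo).
have B_tab : in_tab st (rB, cB) by rewrite /in_tab B_out (todo_not_inner I).
have tabE X : in_tab st' X = (X != (rB, cB)) && in_tab st X by apply: in_tab_remove.
split => //=.
- move=> r c c' rr; rewrite !tabE => /andP[_ c_tab] /andP[_ c'_tab].
  exact: (row_mono J rr c_tab c'_tab).
- exact: (outer_left_closed J).
- by move=> r rr; rewrite updiE; case: eqP => [->//|_]; exact: (front_outer J rr).
- move=> r c rr c_front; rewrite tabE => /andP[neB c_tab].
  by rewrite (negbTE (removal_no_tab_left I J K todoE rr c_front neB)) in c_tab.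
- move=> r c b rr; rewrite !updiE tabE; case: eqP => [->|neq_r] front_c /andP[neB c_tab].
    by rewrite eqxx => -[<-]; exact: (row_mono J rB_row B_tab c_tab (ltW front_c)).
  case: eqP => [/(modk_succ_inj rr rB_row)//|_].
  exact: (bound_le_right J rr front_c c_tab).
Qed.

Lemma queue_inv_remove_in st front last bound rB cB rest :
  todo_inv st front -> row_inv st front last bound -> queue_inv st last bound ->
  st_todo st = (rB, cB) :: rest -> st_out st (rB, cB) ->
  queue_inv (State (st_out st) (upd (st_inn st) (rB, cB) true) (st_ent st) rest
               (rcons (st_q st) (st_ent st (rB, cB), rB + 1, (rB, cB))) (st_q' st))
            last (updi bound (modk (rB + 1)) (Some (st_ent st (rB, cB)))).
Proof.
move=> I J K todoE B_out; set eB := st_ent st _; set tau := modk _.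
have B_todo : (rB, cB) \in st_todo st by rewrite todoE mem_head.
have rB_row : is_row rB := S_rows (todo_sub I B_todo).
have front_cB : front rB < cB := todo_right_of_front I B_todo.
have B_tab : in_tab st (rB, cB) by rewrite /in_tab B_out (todo_not_inner I).
have last_nil r : last r = None by apply: (last_none K); rewrite todoE.
have pending_le_eB := pending_le_right J K rB_row front_cB B_tab.
have pendingE : pending (State (st_out st) (upd (st_inn st) (rB, cB) true) (st_ent st)
    rest (rcons (st_q st) (eB, rB + 1, (rB, cB))) (st_q' st))
    = rcons (pending st) (eB, rB + 1, (rB, cB)).
  by rewrite /pending /= (todo_q'_nil I) ?todoE // !cats0.
split => //=; rewrite ?pendingE.
- by move=> p _ z; rewrite last_nil.
- move=> t; rewrite filter_rcons; case: ifP => [/eqP p_t|_]; last exact: (pending_sorted K).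
  rewrite map_rcons; apply: sorted_rcons_ub; first exact: (pending_sorted K).
  move=> x /mapP[p]; rewrite mem_filter => /andP[/eqP p_t' p_pend] ->.
  by apply: pending_le_eB; rewrite // p_t' -p_t.
- move=> p; rewrite mem_rcons inE => /orP[/eqP->|p_pend].
    by rewrite updiE eqxx; exists eB.
  rewrite updiE; case: eqP => [p_tau|_]; last exact: (pending_le_bound K p_pend).
  by exists eB; rewrite ?pending_le_eB.
- by move=> t z; rewrite last_nil.
Qed.

Lemma row_inv_remove_out st front last bound rB cB rest :
  todo_inv st front -> row_inv st front last bound -> queue_inv st last bound ->
  st_todo st = (rB, cB) :: rest -> ~~ st_out st (rB, cB) ->
  row_inv (State (upd (st_out st) (rB, cB) true) (upd (st_inn st) (rB, cB) true)
             (st_ent st) rest (st_q st) (st_q' st))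
          (updi front rB cB) last bound.
Proof.
move=> I J K todoE B_out; set st' := State _ _ _ _ _ _.
have B_todo : (rB, cB) \in st_todo st by rewrite todoE mem_head.
have rB_row : is_row rB := S_rows (todo_sub I B_todo).
have front_cB : front rB < cB := todo_right_of_front I B_todo.
have tabE X : in_tab st' X = (X != (rB, cB)) && in_tab st X.
  by apply: in_tab_remove => //= neB; rewrite updE (negbTE neB).
split => //=.
- move=> r c c' rr; rewrite !tabE => /andP[_ c_tab] /andP[_ c'_tab].
  exact: (row_mono J rr c_tab c'_tab).
- move=> r c c' rr; rewrite updE; case: eqP => [[-> ->] _|_ c_out c'_c]; last first.
    by apply: upd_true; exact: (outer_left_closed J rr c_out c'_c).
  rewrite le_eqVlt => /orP[/eqP->|c'_cB]; first by rewrite updE eqxx.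
  apply: upd_true; case: (lerP c' (front rB)) => [c'_front|front_c'].
    exact: (outer_left_closed J rB_row (front_outer J rB_row) c'_front).
  apply: (inner_sub_outer I rB_row); apply: (inner_between_front_head I todoE).
  by rewrite front_c'.
- move=> r rr; rewrite updiE; case: eqP => [->|_]; first by rewrite updE eqxx.
  by apply: upd_true; exact: (front_outer J rr).
- move=> r c rr c_front; rewrite tabE => /andP[neB c_tab].
  by rewrite (negbTE (removal_no_tab_left I J K todoE rr c_front neB)) in c_tab.
- move=> r c b rr; rewrite updiE tabE; case: eqP => [->|_] front_c /andP[_ c_tab].
    exact: (bound_le_right J rB_row (lt_trans front_cB front_c) c_tab).
  exact: (bound_le_right J rr front_c c_tab).
Qed.

Lemma leftmost_free_outE st front last bound s cB :
  row_inv st front last bound -> leftmost_free k st s (modk s, cB) ->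
  forall c, st_out st (modk s, c) = (c < cB).
Proof.
move=> J [_ B_out B_min] c; have s_row := modk_row k_gt0 s.
apply/idP/idP => [c_out|c_cB].
  by rewrite ltNge; apply: contra B_out => cB_c; exact: (outer_left_closed J s_row c_out cB_c).
by apply/negPn/negP => /(B_min (modk s, c) erefl) /=; rewrite leNgt c_cB.
Qed.

Lemma front_lt_leftmost_free st front last bound s cB :
  row_inv st front last bound -> leftmost_free k st s (modk s, cB) ->
  front (modk s) < cB.
Proof.
by move=> J B_free; rewrite -(leftmost_free_outE J B_free) (front_outer J) ?modk_row.
Qed.

Lemma row_inv_place st front last bound x s q cB :
  row_inv st front last bound ->
  (forall B', B'.1 = modk s -> in_tab st B' -> (st_ent st B' <= x)%O) ->
  leftmost_free k st s (modk s, cB) ->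
  row_inv (State (upd (st_out st) (modk s, cB) true) (st_inn st)
             (upd (st_ent st) (modk s, cB) x) [::] q (st_q' st))
          (updi front (modk s) cB) (updi last (modk s) (Some x)) bound.
Proof.
move=> J row_le_x B_free.
set rho := modk s in row_le_x B_free *.
have outE := leftmost_free_outE J B_free.
split => //=.
- move=> r c c' rr; rewrite /in_tab /= !updE.
  have [[-> ->]|_] := eqVneq (r, c) (rho, cB).
    case: eqP => [_ _ _ _|_ _ /= /andP[c'_out _] cB_c']; first exact: lexx.
    by move: c'_out; rewrite outE ltNge cB_c'.
  case: eqP => [[-> ->] c_tab _ _|_ c_tab c'_tab]; last exact: (row_mono J rr c_tab c'_tab).
  by apply: row_le_x; rewrite //= /in_tab.
- move=> r c c' rr; rewrite updE; case: eqP => [[-> ->] _|_ c_out c'_c]; last first.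
    by apply: upd_true; exact: (outer_left_closed J rr c_out c'_c).
  rewrite le_eqVlt => /orP[/eqP->|c'_cB]; first by rewrite updE eqxx.
  by apply: upd_true; rewrite outE.
- move=> r rr; rewrite updiE; case: eqP => [->|_]; first by rewrite updE eqxx.
  by apply: upd_true; exact: (front_outer J rr).
- move=> r c rr; rewrite !updiE /in_tab /= !updE; case: eqP => [->|ne_r] c_front.
    case: eqP => [_|_] /=; first by exists x.
    by move=> c_tab; exists x; rewrite // row_le_x.
  by case: eqP => [[eq_r _]//|_]; exact: (left_le_last J rr c_front).
- move=> r c b rr; rewrite !updiE /in_tab /= !updE.
  case: eqP => [->|ne_r] front_c; last first.
    by case: eqP => [[eq_r _]//|_]; exact: (bound_le_right J rr front_c).
  have neB : (rho, c) != (rho, cB) by apply: contraTneq front_c => -[->]; rewrite ltxx.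
  rewrite (negbTE neB) => /andP[c_out _].
  by move: c_out; rewrite outE ltNge (ltW front_c).
Qed.

Lemma queue_inv_place st last bound x s (l B : box) q :
  queue_inv st last bound -> st_todo st = [::] -> st_q st = (x, s, l) :: q ->
  queue_inv (State (upd (st_out st) B true) (st_inn st) (upd (st_ent st) B x) [::]
               q (st_q' st))
            (updi last (modk s) (Some x)) bound.
Proof.
move=> K todoE qE.
have x_pend : (x, s, l) \in pending st by rewrite /pending qE mem_head.
have pend_sub p : p \in q ++ st_q' st -> p \in pending st.
  by rewrite /pending qE inE => ->; rewrite orbT.
split => //=.
- move=> p /= p_in z; rewrite updiE; case: eqP => [p_s [<-]|_].
    exact: (pending_head_min K qE p_in p_s).
  exact: (last_le_pending K (pend_sub p p_in)).
- exact: (pending_tail_sorted K qE).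
- by move=> p /pend_sub; exact: (pending_le_bound K).
- move=> t z; rewrite updiE; case: eqP => [->|_]; last exact: (last_le_bound K).
  by move=> [<-]; exact: (pending_le_bound K x_pend).
Qed.

Lemma front_lt_leftmost_greater st front last bound x s l q cB :
  row_inv st front last bound -> queue_inv st last bound -> st_q st = (x, s, l) :: q ->
  leftmost_greater k st s x (modk s, cB) -> front (modk s) < cB.
Proof.
move=> J K qE [_ B_tab x_B _]; rewrite ltNge; apply/negP => cB_front.
have [z last_z B_z] := left_le_last J (modk_row k_gt0 s) cB_front B_tab.
have z_x : (z <= x)%O.
  by apply: (last_le_pending K (p := (x, s, l))); rewrite ?last_z // /pending qE mem_head.
by move: x_B; rewrite ltNge (le_trans B_z z_x).
Qed.

Lemma leftmost_greater_left (st : state T) s x cB :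
  leftmost_greater k st s x (modk s, cB) ->
  forall c, c < cB -> in_tab st (modk s, c) -> (st_ent st (modk s, c) <= x)%O.
Proof.
move=> [_ _ _ B_min] c c_cB c_tab; rewrite leNgt; apply/negP.
by move=> /(B_min (modk s, c) erefl c_tab); rewrite /= leNgt c_cB.
Qed.

Lemma row_inv_bump st front last bound x s cB y q q' :
  row_inv st front last bound -> front (modk s) < cB ->
  leftmost_greater k st s x (modk s, cB) -> y = st_ent st (modk s, cB) ->
  row_inv (State (st_out st) (st_inn st) (upd (st_ent st) (modk s, cB) x) [::] q q')
          (updi front (modk s) cB) (updi last (modk s) (Some x))
          (updi bound (modk (s + 1)) (Some y)).
Proof.
move=> J front_cB B_gt yE; have left_le_x := leftmost_greater_left B_gt.
case: B_gt => _ B_tab x_B _.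
set rho := modk s in B_tab x_B left_le_x front_cB yE *.
have rho_row : is_row rho := modk_row k_gt0 s.
have rho_tau : modk (rho + 1) = modk (s + 1) by rewrite modkDml.
split => //=.
- move=> r c c' rr; rewrite /in_tab /= !updE.
  have [[-> ->]|neB] := eqVneq (r, c) (rho, cB).
    case: eqP => [_ _ _ _|_ _ c'_tab cB_c']; first exact: lexx.
    exact: ltW (lt_le_trans x_B (row_mono J rho_row B_tab c'_tab cB_c')).
  case: eqP => [[eq_r ->] c_tab _ c_cB|_ c_tab c'_tab]; last exact: (row_mono J rr c_tab c'_tab).
  rewrite eq_r in neB c_tab *; apply: left_le_x c_tab; rewrite lt_neqAle c_cB andbT.
  by apply: contra_neq neB => ->.
- exact: (outer_left_closed J).
- move=> r rr; rewrite updiE; case: eqP => [->|_]; last exact: (front_outer J rr).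
  by case/andP: B_tab.
- move=> r c rr; rewrite !updiE /in_tab /= !updE; case: eqP => [->|ne_r] c_front.
    case: eqP => [_|neB] /=; first by exists x.
    move=> c_tab; exists x => //; apply: left_le_x c_tab.
    by rewrite lt_neqAle c_front andbT; apply: contra_not_neq neB => ->.
  by case: eqP => [[eq_r _]//|_]; exact: (left_le_last J rr c_front).
- move=> r c b rr; rewrite !updiE /in_tab /= !updE.
  case: eqP => [->|ne_r] front_c.
    have neB : (rho, c) != (rho, cB) by apply: contraTneq front_c => -[->]; rewrite ltxx.
    rewrite (negbTE neB) rho_tau eqxx yE => c_tab [<-].
    exact: (row_mono J rho_row B_tab c_tab (ltW front_c)).
  have neB : (r, c) != (rho, cB) by apply: contra_not_neq ne_r => -[].
  rewrite (negbTE neB); case: eqP => [|_]; last exact: (bound_le_right J rr front_c).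
  by rewrite -rho_tau => /(modk_succ_inj rr rho_row)/ne_r.
Qed.

Lemma queue_inv_bump st front last bound x s l q cB y :
  row_inv st front last bound -> queue_inv st last bound ->
  st_q st = (x, s, l) :: q -> front (modk s) < cB ->
  leftmost_greater k st s x (modk s, cB) -> y = st_ent st (modk s, cB) ->
  queue_inv (State (st_out st) (st_inn st) (upd (st_ent st) (modk s, cB) x) [::]
               q (rcons (st_q' st) (y, s + 1, l)))
            (updi last (modk s) (Some x)) (updi bound (modk (s + 1)) (Some y)).
Proof.
move=> J K qE front_cB [_ B_tab x_B _] yE; set tau := modk (s + 1).
have rho_row : is_row (modk s) := modk_row k_gt0 s.
have to_tau_le_y := pending_le_right J K rho_row front_cB B_tab.
have last_tau_le_y := last_le_right J K rho_row front_cB B_tab.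
rewrite modkDml -/tau -yE in to_tau_le_y last_tau_le_y; rewrite -yE in x_B.
have x_pend : (x, s, l) \in pending st by rewrite /pending qE mem_head.
have pend_sub p : p \in q ++ st_q' st -> p \in pending st.
  by rewrite /pending qE inE => ->; rewrite orbT.
have pendingE : pending (State (st_out st) (st_inn st) (upd (st_ent st) (modk s, cB) x)
    [::] q (rcons (st_q' st) (y, s + 1, l))) = rcons (q ++ st_q' st) (y, s + 1, l).
  by rewrite /pending /= rcons_cat.
split => //=; rewrite ?pendingE.
- move=> p; rewrite mem_rcons inE => /orP[/eqP->|p_in] z; rewrite updiE /=.
    by case: eqP => [_ [<-]|_ /last_tau_le_y]; first exact: ltW.
  case: eqP => [p_s [<-]|_]; first exact: (pending_head_min K qE p_in p_s).
  exact: (last_le_pending K (pend_sub p p_in)).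
- move=> t; rewrite filter_rcons.
  case: ifP => [/eqP tau_t|_]; last exact: (pending_tail_sorted K qE).
  rewrite map_rcons; apply: sorted_rcons_ub; first exact: (pending_tail_sorted K qE).
  move=> z /mapP[p]; rewrite mem_filter => /andP[/eqP p_t p_in] ->.
  by apply: to_tau_le_y; rewrite ?pend_sub // p_t -tau_t.
- move=> p; rewrite mem_rcons inE => /orP[/eqP->|p_in]; rewrite updiE.
    by rewrite eqxx; exists y.
  case: eqP => [p_tau|_]; first by exists y; rewrite ?to_tau_le_y ?pend_sub.
  exact: (pending_le_bound K (pend_sub p p_in)).
- move=> t z; rewrite !updiE; case: eqP => [->|_].
    move=> [<-]; case: eqP => [_|_]; first by exists y; rewrite // ltW.
    exact: (pending_le_bound K x_pend).
  move=> last_z; case: eqP => [t_tau|_]; last exact: (last_le_bound K last_z).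
  by exists y; rewrite // last_tau_le_y // -t_tau.
Qed.

Definition insertion_inv (st : state T) (front : int -> int) : Prop :=
  exists last bound,
    [/\ todo_inv st front, row_inv st front last bound & queue_inv st last bound].

Definition front_advance (front front' : int -> int) (e : event) : Prop :=
  (forall r, front r <= front' r) /\
  forall l B, e = Some (l, B) -> [/\ is_row B.1, front B.1 < B.2 & front' B.1 = B.2].

Lemma front_advance_updi front l rB cB :
  is_row rB -> front rB < cB ->
  front_advance front (updi front rB cB) (Some (l, (rB, cB))).
Proof.
move=> rB_row front_cB; split=> [r|_ _ [_ <-]]; last by rewrite /= updiE eqxx.
by rewrite updiE; case: eqP => [->|_] //; exact: ltW.
Qed.

Lemma insertion_inv_init : insertion_inv (init_state k R S r0) (inner R).
Proof.
exists (fun _ => None), (fun _ => None).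
by split; [exact: todo_inv_init | exact: row_inv_init | exact: queue_inv_init].
Qed.

Lemma insertion_inv_step st e st' front :
  insertion_inv st front -> step k st e st' ->
  exists2 front', insertion_inv st' front' & front_advance front front' e.
Proof.
move=> [last [bound [I J K]]] st_step; case: st_step I J K.
- move=> {}st [rB cB] todo todoE B_out I J K.
  have B_todo : (rB, cB) \in st_todo st by rewrite todoE mem_head.
  exists (updi front rB cB).
    exists last, (updi bound (modk (rB + 1)) (Some (st_ent st (rB, cB)))); split.
    + by apply: (todo_inv_remove I todoE) => //=; rewrite updE eqxx.
    + exact: (row_inv_remove_in I J K todoE B_out).
    + exact: (queue_inv_remove_in I J K todoE B_out).
  exact: front_advance_updi (S_rows (todo_sub I B_todo)) (todo_right_of_front I B_todo).
- move=> {}st [rB cB] todo todoE B_out I J K.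
  have B_todo : (rB, cB) \in st_todo st by rewrite todoE mem_head.
  exists (updi front rB cB).
    exists last, bound; split.
    + apply: (todo_inv_remove I todoE) => //= [B|]; first exact: upd_true.
      by rewrite updE eqxx.
    + exact: (row_inv_remove_out I J K todoE B_out).
    + by apply: (queue_inv_same_pending K) => //; rewrite todoE.
  exact: front_advance_updi (S_rows (todo_sub I B_todo)) (todo_right_of_front I B_todo).
- move=> {}st x s l q [rB cB] todoE qE row_le_x B_free I J K.
  case: (B_free) => /= rBE _ _; subst rB.
  have front_cB := front_lt_leftmost_free J B_free.
  have [le_front adv] := front_advance_updi l (modk_row k_gt0 s) front_cB.
  exists (updi front (modk s) cB) => //.
  exists (updi last (modk s) (Some x)), bound; split.
  + by apply: (todo_inv_queue I todoE) => // B; exact: upd_true.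
  + exact: (row_inv_place _ J row_le_x B_free).
  + exact: (queue_inv_place _ K todoE qE).
- move=> {}st x s l q [rB cB] todoE qE B_gt I J K.
  case: (B_gt) => /= rBE _ _ _; subst rB.
  have front_cB := front_lt_leftmost_greater J K qE B_gt.
  have [le_front adv] := front_advance_updi l (modk_row k_gt0 s) front_cB.
  exists (updi front (modk s) cB) => //.
  exists (updi last (modk s) (Some x)), (updi bound (modk (s + 1)) (Some (st_ent st (modk s, cB)))).
  split; first exact: (todo_inv_queue I todoE).
  + exact: (row_inv_bump _ _ J front_cB B_gt erefl).
  + exact: (queue_inv_bump J K qE front_cB B_gt erefl).
- move=> {}st todoE qE _ I J K; exists front; last by split.
  exists last, bound; split; first exact: todo_inv_queue I todoE _ _ _ _.
  + by case: J; split.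
  + by apply: (queue_inv_same_pending K); rewrite // /pending qE cats0.
- by move=> *; exists front; [exists last, bound | split].
Qed.

End Invariants.

Lemma uniq_cat3_mid (A : eqType) (a b c : seq A) x :
  uniq (a ++ b ++ x :: c) -> [/\ x \notin a, x \notin b & x \notin c].
Proof.
move=> /(count_uniq_mem x); rewrite !mem_cat mem_head !orbT !count_cat /= eqxx.
by move=> h; split; apply/count_memPn; lia.
Qed.

Section Rounds.
Variables (k : nat) (disp : Order.disp_t) (T : orderType disp).
Variables (S : seq box) (r0 : int).
Hypothesis S_uniq : uniq S.
Local Notation proc := (proc_le k r0).

(* The labels of the live routes, listed increasingly for the processing order
   of [S]: the routes in [q'] were served earlier in the current round than
   those still waiting in [q]. In [round_inv st cnt], [cnt l] counts the
   extensions of route [l] so far and [i] is the current round. *)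
Definition labels (st : state T) : seq box :=
  [seq p.2 | p <- st_q' st] ++ [seq p.2 | p <- st_q st] ++ st_todo st.

Definition round_inv (st : state T) (cnt : box -> nat) : Prop :=
  exists i, [/\ subseq (labels st) (sort proc S),
    {in st_todo st, forall l, cnt l = 0%N},
    {in st_q st, forall p, cnt p.2 = i},
    {in st_q' st, forall p, cnt p.2 = i.+1} &
    st_todo st != [::] -> st_q' st = [::] /\ i = 1%N].

Lemma round_inv_init R : round_inv (init_state k R S r0) (fun _ => 0%N).
Proof. by exists 1%N; split; rewrite //= /labels /= subseq_refl. Qed.

Lemma step_labels_subseq (st st' : state T) e :
  step k st e st' -> subseq (labels st') (labels st).
Proof.
case=> {st e st'} /= [st B todo todoE _|st B todo todoE _|st x s l q B todoE qE _ _|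
  st x s l q B todoE qE _|st todoE qE _|//];
  rewrite /labels ?todoE ?qE //= ?cats0 ?map_rcons ?cat_rcons //;
  by rewrite ?subseq_cat2l subseq_cons.
Qed.

Lemma step_label_head (st st' : state T) e l B :
  step k st e st' -> e = Some (l, B) ->
  (exists rest, st_todo st = l :: rest) \/
  (st_todo st = [::] /\ exists x s q, st_q st = (x, s, l) :: q).
Proof.
case=> {st e st'} [st B' todo todoE _|st B' todo todoE _|st x s l' q B' todoE qE _ _|
  st x s l' q B' todoE qE _|//|//] [<- _].
- by left; exists todo.
- by left; exists todo.
- by right; split=> //; exists x, s, q.
- by right; split=> //; exists x, s, q.
Qed.

Lemma step_label_in (st st' : state T) e l B :
  step k st e st' -> e = Some (l, B) -> l \in labels st.
Proof.
move=> st_step eE.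
case: (step_label_head st_step eE) => [[rest todoE]|[todoE [x [s [q qE]]]]];
  by rewrite /labels ?todoE ?qE !mem_cat ?mem_head ?orbT.
Qed.

Lemma served_before a x b y : subseq (a ++ x :: b) (sort proc S) -> y \in b -> proc x y.
Proof.
move=> sub y_b; have sorted_axb : sorted proc (a ++ x :: b).
  apply: (subseq_sorted (@proc_trans k r0) sub); exact: (sort_sorted (@proc_total k r0)).
exact: proc_head_min (cat_sorted2 sorted_axb).2 y_b.
Qed.

Lemma round_inv_step st e st' cnt cnt' :
  round_inv st cnt -> step k st e st' ->
  (forall l, cnt' l = (cnt l + is_label l e)%N) -> round_inv st' cnt'.
Proof.
move=> [i [sub todo0 qi q'i todo_q']] st_step cntE.
have uniq_labels : uniq (labels st) by apply: subseq_uniq sub _; rewrite sort_uniq.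
have sub' : subseq (labels st') (sort proc S) by apply: subseq_trans (step_labels_subseq st_step) sub.
have other l' : (forall l B, e = Some (l, B) -> l' != l) -> cnt' l' = cnt l'.
  move=> ne_l; rewrite cntE; case: e ne_l {st_step cntE} => [[l B]|_] /=; last by rewrite addn0.
  by move=> /(_ l B erefl) /negbTE; rewrite eq_sym => ->; rewrite addn0.
clear sub; case: st_step sub' todo0 qi q'i todo_q' uniq_labels other cntE =>
  {st e st'} [st B todo todoE _|st B todo todoE _|st x s l q B todoE qE _ _|
  st x s l q B todoE qE _|st todoE qE _|st todoE qE q'E] /= sub' todo0 qi q'i todo_q' uniq_labels other cntE.
- have [q'0 i1] : st_q' st = [::] /\ i = 1%N by apply: todo_q'; rewrite todoE.
  move: uniq_labels; rewrite /labels todoE => /uniq_cat3_mid [_ B_q B_todo].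
  exists i; split=> //= [l l_todo|p|p]; rewrite ?q'0 //.
  + rewrite other ?todo0 ?todoE ?inE ?l_todo ?orbT //.
    by move=> _ _ [<- _]; apply: contraNneq B_todo => <-.
  + rewrite mem_rcons inE => /orP[/eqP->|p_q] /=.
      by rewrite cntE todo0 ?todoE ?mem_head //= eqxx i1.
    by rewrite other ?qi // => _ _ [<- _]; apply: contraNneq B_q => <-; apply/mapP; exists p.
- have [q'0 i1] : st_q' st = [::] /\ i = 1%N by apply: todo_q'; rewrite todoE.
  move: uniq_labels; rewrite /labels todoE => /uniq_cat3_mid [_ B_q B_todo].
  exists i; split=> //= [l l_todo|p p_q|p]; rewrite ?q'0 //.
  + rewrite other ?todo0 ?todoE ?inE ?l_todo ?orbT //.
    by move=> _ _ [<- _]; apply: contraNneq B_todo => <-.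
  + by rewrite other ?qi // => _ _ [<- _]; apply: contraNneq B_q => <-; apply/mapP; exists p.
- move: uniq_labels; rewrite /labels todoE qE cats0 /= -(cat0s (l :: _)).
  move=> /uniq_cat3_mid [l_q' _ l_q].
  exists i; split=> //= [p p_q|p p_q'].
  + rewrite other ?qi ?qE ?inE ?p_q ?orbT //.
    by move=> _ _ [<- _]; apply: contraNneq l_q => <-; apply/mapP; exists p.
  + by rewrite other ?q'i // => _ _ [<- _]; apply: contraNneq l_q' => <-; apply/mapP; exists p.
- move: uniq_labels; rewrite /labels todoE qE cats0 /= -(cat0s (l :: _)).
  move=> /uniq_cat3_mid [l_q' _ l_q].
  exists i; split=> //= [p p_q|p].
  + rewrite other ?qi ?qE ?inE ?p_q ?orbT //.
    by move=> _ _ [<- _]; apply: contraNneq l_q => <-; apply/mapP; exists p.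
  + rewrite mem_rcons inE => /orP[/eqP->|p_q'] /=.
      by rewrite cntE (qi (x, s, l)) ?qE ?mem_head //= eqxx addn1.
    by rewrite other ?q'i // => _ _ [<- _]; apply: contraNneq l_q' => <-; apply/mapP; exists p.
- by exists i.+1; split=> // p p_q; rewrite other ?q'i // => ? ? [].
- exists i; split=> // [l l_todo|p p_q|p p_q']; rewrite other => [|//].
  + exact: todo0.
  + exact: qi.
  + exact: q'i.
Qed.

End Rounds.

Lemma proj_same_row n k (P Q : point) : P.1 = Q.1 ->
  (proj n k P).1 = (proj n k Q).1 /\ (proj n k P).2 - (proj n k Q).2 = P.2 - Q.2.
Proof. by rewrite /proj /= => ->; split=> //; lia. Qed.

Lemma pt_lt_rows (P Q : point) : pt_lt P Q -> P.1 <= Q.1 /\ (P.1 = Q.1 -> Q.2 < P.2).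
Proof.
case: P Q => [x y] [x' y']; rewrite /pt_lt /pt_le /= => /andP[/orP[lt_x|/andP[/eqP<- le_y]] ne_P].
  by split=> [|eq_x]; [exact: ltW | rewrite eq_x ltxx in lt_x].
by split=> // _; rewrite lt_neqAle le_y andbT; apply: contraNneq ne_P => ->.
Qed.

Section LabelCount.
Variable ev : nat -> event.

Definition label_count (t : nat) (l : box) : nat :=
  count (fun t' => is_label l (ev t')) (iota 0 t).

Lemma label_countS t l : label_count t.+1 l = (label_count t l + is_label l (ev t))%N.
Proof. by rewrite /label_count -addn1 iotaD count_cat /= addn0. Qed.

Lemma label_count_mono t t' l : (t <= t')%N -> (label_count t l <= label_count t' l)%N.
Proof.
move=> /subnKC <-; elim: (t' - t)%N => [|d IH]; first by rewrite addn0.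
by rewrite addnS label_countS (leq_trans IH) ?leq_addr.
Qed.

End LabelCount.

Section Run.
Variables (n k : nat) (disp : Order.disp_t) (T : orderType disp).
Variables (R : tableau T) (S : seq box) (r0 : int).
Variables (st : nat -> state T) (ev : nat -> event).
Hypothesis k_gt0 : (0 < k)%N.
Hypothesis R_tableau : is_tableau n k R.
Hypothesis S_input : multi_input n k R S.
Hypothesis run : is_run k R S r0 st ev.

Local Notation proc := (proc_le k r0).
Local Notation cnt := (label_count ev).

Lemma input_S_uniq : uniq S.
Proof. by case: S_input. Qed.

Lemma input_S_rows B : B \in S -> is_row k B.1.
Proof. by case: S_input => _ S_boxes _ _ _ /S_boxes. Qed.

Lemma input_S_outside_inner B : B \in S -> inner R B.1 < B.2.
Proof. by case: S_input => _ _ S_out _ _ /S_out; rewrite /box_in -ltNge. Qed.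

Lemma input_extension : exists nu : int -> int, forall r c, is_row k r ->
  (c <= nu r) = (c <= inner R r) || ((r, c) \in S).
Proof.
case: S_input => _ _ _ _ [nu [_ nuE]]; exists nu => r c rr.
have := nuE (r, c); rewrite /in_part /= proj_row // => nuE_rc.
apply/idP/idP => [/nuE_rc [->|->]|/orP[c_in|c_S]]; rewrite ?orbT //.
  by apply/nuE_rc; left.
by apply/nuE_rc; right.
Qed.

Lemma tableau_row_mono r c c' : is_row k r ->
  inner R r < c -> c <= c' -> c' <= outer R r -> (entry R (r, c) <= entry R (r, c'))%O.
Proof.
case: R_tableau => _ _ _ R_row_mono _ rr c_in c_c' c'_out.
have := R_row_mono r c c'; rewrite !proj_row //.
apply; rewrite // /in_skew /in_part /= -ltNge ?c'_out ?(le_trans c_c') //.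
exact: lt_le_trans c_in c_c'.
Qed.

Lemma run_init_inv : insertion_inv k R S r0 (st 0) (inner R).
Proof.
case: R_tableau => _ _ inner_le_outer _ _; rewrite run.1.
exact: insertion_inv_init input_S_uniq input_S_outside_inner inner_le_outer tableau_row_mono.
Qed.

Lemma run_step_inv t front : insertion_inv k R S r0 (st t) front ->
  exists2 front', insertion_inv k R S r0 (st t.+1) front' & front_advance k front front' (ev t).
Proof.
have [nu nu_S] := input_extension.
move=> I; apply: (insertion_inv_step k_gt0 input_S_uniq input_S_rows nu_S I).
exact: run.2.
Qed.

Lemma run_front t : exists2 front, insertion_inv k R S r0 (st t) front &
  forall t' l B, (t' < t)%N -> ev t' = Some (l, B) -> B.2 <= front B.1.
Proof.
elim: t => [|t [front I hist]]; first by exists (inner R); first exact: run_init_inv.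
have [front' I' [le_front adv]] := run_step_inv I.
exists front' => // t' l B; rewrite ltnS leq_eqVlt => /orP[/eqP->|lt_t] evE.
  by have [_ _ ->] := adv l B evE.
exact: le_trans (hist t' l B lt_t evE) (le_front _).
Qed.

Lemma events_move_right t1 t2 l1 l2 (b1 b2 : box) :
  (t1 < t2)%N -> ev t1 = Some (l1, b1) -> ev t2 = Some (l2, b2) ->
  b1.1 = b2.1 -> b1.2 < b2.2.
Proof.
move=> lt_t ev1 ev2 same_row; have [front I hist] := run_front t2.
have [front' _ [_ adv]] := run_step_inv I; have [_ front_b2 _] := adv l2 b2 ev2.
by apply: le_lt_trans (hist t1 l1 b1 lt_t ev1) _; rewrite same_row.
Qed.

Lemma run_round_inv t : round_inv k S r0 (st t) (cnt t).
Proof.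
elim: t => [|t IH]; first by rewrite run.1; exact: round_inv_init.
by apply: (round_inv_step input_S_uniq IH (run.2 t)) => l; exact: label_countS.
Qed.

Lemma run_labels_mono t t' : (t <= t')%N -> {subset labels (st t') <= labels (st t)}.
Proof.
move=> /subnKC <-; elim: (t' - t)%N => [|d IH]; first by rewrite addn0.
by rewrite addnS => l /(mem_subseq (step_labels_subseq (run.2 _))) /IH.
Qed.

Lemma round_order_at t l1 b1 l2 :
  ev t = Some (l1, b1) -> l2 \in labels (st t) -> l2 != l1 ->
  (cnt t l1 < cnt t l2)%N \/ (cnt t l1 = cnt t l2 /\ proc l1 l2).
Proof.
move=> ev_t l2_in ne_l; have [i [sub todo0 qi q'i todo_q']] := run_round_inv t.
case: (step_label_head (run.2 t) ev_t) => [[rest todoE]|[todoE [x [s [q qE]]]]].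
  have c0 : cnt t l1 = 0%N by rewrite todo0 // todoE mem_head.
  move: l2_in sub; rewrite /labels todoE !mem_cat c0.
  case/orP => [/mapP[p p_q' ->]|/orP[/mapP[p p_q ->]|l2_todo]] sub.
  - by left; rewrite (q'i p p_q').
  - by left; rewrite (qi p p_q) (todo_q' _).2 // todoE.
  - move: l2_todo; rewrite inE (negbTE ne_l) /= => l2_rest; right.
    split; first by rewrite todo0 // todoE inE l2_rest orbT.
    by apply: (served_before _ l2_rest); rewrite catA in sub; exact: sub.
have ci : cnt t l1 = i by rewrite (qi (x, s, l1)) // qE mem_head.
move: l2_in sub; rewrite /labels todoE qE cats0 !mem_cat ci.
case/orP => [/mapP[p p_q' ->]|l2_q] sub; first by left; rewrite (q'i p p_q').
move: l2_q; rewrite /= inE (negbTE ne_l) /= => /mapP[p p_q l2E]; right.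
split; first by rewrite l2E qi // qE inE p_q orbT.
by apply: (served_before sub); apply/mapP; exists p.
Qed.

Lemma event_round_order t1 t2 l1 l2 (b1 b2 : box) :
  (t1 < t2)%N -> ev t1 = Some (l1, b1) -> ev t2 = Some (l2, b2) -> l1 != l2 ->
  (cnt t1 l1 < cnt t2 l2)%N \/ (cnt t1 l1 = cnt t2 l2 /\ proc l1 l2).
Proof.
move=> lt_t ev1 ev2 ne_l.
have l2_in : l2 \in labels (st t1).
  exact: run_labels_mono (ltnW lt_t) _ (step_label_in (run.2 t2) ev2).
have le_cnt : (cnt t1 l2 <= cnt t2 l2)%N := label_count_mono ev l2 (ltnW lt_t).
rewrite eq_sym in ne_l; case: (round_order_at ev1 l2_in ne_l) => [lt_c|[eq_c pr]].
  by left; exact: leq_trans lt_c le_cnt.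
by move: le_cnt; rewrite leq_eqVlt -eq_c => /orP[/eqP|]; [right | left].
Qed.

Lemma route_event_before (P Q : point) r X Y tG tH :
  pt_lt P Q -> route_pt n k ev P r X tG -> route_pt n k ev Q r Y tH -> (tH < tG)%N.
Proof.
move=> /pt_lt_rows [le_row same_row_lt].
move=> [bG [jG [evG cntG rG _ _]]] [bH [jH [evH cntH rH _ _]]].
change (cnt tG (proj n k P) = jG) in cntG; change (cnt tH (proj n k Q) = jH) in cntH.
have le_j : (jH <= jG)%N by move: rH; rewrite rG; lia.
have same_round : jG = jH -> P.1 = Q.1 by move: rH; rewrite rG => + eq_j; rewrite eq_j; lia.
rewrite ltnNge leq_eqVlt; apply/negP => /orP[/eqP eq_t|lt_t].
  have eq_L : proj n k P = proj n k Q by move: evH; rewrite -eq_t evG => /Some_inj/(congr1 fst).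
  have eq_row : P.1 = Q.1 by apply: same_round; rewrite -cntG -cntH -eq_t eq_L.
  have [_] := proj_same_row n k eq_row; have := same_row_lt eq_row; rewrite eq_L; lia.
case: (eqVneq (proj n k P) (proj n k Q)) => [eq_L|ne_L].
  have := label_count_mono ev (proj n k P) lt_t.
  by rewrite label_countS evG /= eqxx cntG eq_L cntH; lia.
case: (event_round_order lt_t evG evH ne_L) => [|[eq_c pr]]; first by rewrite cntG cntH; lia.
have eq_row : P.1 = Q.1 by apply: same_round; rewrite -cntG -cntH.
have [eq_brow eq_bcol] := proj_same_row n k eq_row.
have := proc_same_row pr eq_brow; have := same_row_lt eq_row; lia.
Qed.

Lemma route_points_left (P Q : point) r X Y tG tH :
  route_pt n k ev P r X tG -> route_pt n k ev Q r Y tH -> (tH < tG)%N ->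
  strictly_left Y X.
Proof.
move=> [bG [jG [evG _ _ XG bGE]]] [bH [jH [evH _ _ YH bHE]]] lt_t.
have eq_row : Y.1 = X.1 by rewrite XG YH.
have [eq_brow eq_bcol] := proj_same_row n k eq_row.
have := events_move_right lt_t evH evG; rewrite -bGE -bHE => /(_ eq_brow).
by split=> //; lia.
Qed.

End Run.

Theorem mainTheorem12 (n k : nat) (disp : Order.disp_t) (T : orderType disp)
    (R : tableau T) (S : seq box) (r0 : int)
    (st : nat -> state T) (ev : nat -> event) (P Q : point) :
  (0 < k)%N -> (k < n)%N ->
  is_tableau n k R ->
  multi_input n k R S ->
  is_run k R S r0 st ev ->
  proj n k P \in S -> proj n k Q \in S ->
  pt_lt P Q ->
  forall (r : int) (X Y : point) (tG tH : nat),
    route_pt n k ev P r X tG -> route_pt n k ev Q r Y tH ->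
    strictly_left Y X /\ (tH < tG)%N.
Proof.
move=> k_gt0 _ R_tab S_input run _ _ lt_PQ r X Y tG tH routeG routeH.
have lt_t : (tH < tG)%N := route_event_before k_gt0 S_input run lt_PQ routeG routeH.
split=> //; exact: (route_points_left k_gt0 R_tab S_input run routeG routeH lt_t).
Qed.
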